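(* The function $n \mapsto \mathrm{vol}(L(n))$, for integers $n \geq 5$, is increasing. Here $$\mathrm{vol}(L(n)) = \frac{n}{2}\Big(2\Lambda(\theta_n) + \Lambda(\theta_n + \tfrac{\pi}{n}) + \Lambda(\theta_n - \tfrac{\pi}{n}) - \Lambda(2\theta_n - \tfrac{\pi}{2})\Big),$$ with $$\theta_n = \frac{\pi}{2} - \arccos\Big(\frac{1}{2\cos(\pi/n)}\Big), \qquad \Lambda(z) = -\int_0^z \log|2\sin t|\,dt.$$
   Context: $L(n)$, $n\ge5$, is the $n$-th L\''obell polyhedron, realized as a compact right-angled hyperbolic polyhedron in $\mathbb{H}^3$. Combinatorially it consists of two pentagonal flowers (an $n$-gon surrounded cyclically by $n$ pentagons) glued along their boundaries so that the 1-skeleton is trivalent. The volume formula displayed is Vesnin's known formula for its hyperbolic volume. *)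

From Stdlib Require Import Reals ClassicalEpsilon.
Open Scope R_scope.

(* Oriented Riemann integral as a relation: [v] is the Riemann integral of [f]
   from [a] to [b] (Stdlib allows [b < a], giving the oriented integral). *)
Definition is_RInt (f : R -> R) (a b v : R) : Prop :=
  exists pr : Riemann_integrable f a b, RiemannInt pr = v.

(* Integrand of the Lobachevsky function, truncated from below at -M so that
   it is bounded (hence Riemann integrable). *)
Definition lob_integrand (t : R) : R := ln (Rabs (2 * sin t)).
Definition lob_trunc (M : nat) (t : R) : R := Rmax (lob_integrand t) (- INR M).

(* [l] is the (Lebesgue / improper) integral of log|2 sin t| over [0,z]:
   limit, as M -> oo, of the integrals of the truncations (monotone
   convergence; the integrand is bounded above by ln 2). *)
Definition lob_integral_spec (z l : R) : Prop :=
  exists v : nat -> R,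
    (forall M, is_RInt (lob_trunc M) 0 z (v M)) /\ Un_cv v l.

Definition Lobachevsky (z : R) : R :=
  - epsilon (inhabits 0) (fun l => lob_integral_spec z l).

Definition theta (n : nat) : R :=
  PI / 2 - acos (1 / (2 * cos (PI / INR n))).

Definition vol_Lobell (n : nat) : R :=
  INR n / 2 *
  (2 * Lobachevsky (theta n)
   + Lobachevsky (theta n + PI / INR n)
   + Lobachevsky (theta n - PI / INR n)
   - Lobachevsky (2 * theta n - PI / 2)).

(* Write l(t) = log|2 sin t| (lob_integrand), so that Lambda' = -l, and
     H(t, x) = 2 Lambda(t) + Lambda(t + x) + Lambda(t - x) - Lambda(2t - pi/2),
   so that vol L(n) = n/2 * H(theta(pi/n), pi/n), where
   theta(x) = pi/2 - arccos(1/(2 cos x)) (crit_angle).  For 0 < x1 < x2 <= pi/5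
   one has theta(x1) < theta(x2), and
   (A) dH/dt is nonincreasing in t (l increases on (0, 3/2], decreases on
       [-3/2, 0)) and vanishes at t = theta(x) by the identity
       (2 sin t)^2 (2 sin(t+x)) (2 sin(t-x)) = (2 cos 2t)^2 when 2 sin t cos x = 1,
       hence H(theta(x2), x1) <= H(theta(x1), x1);
   (B) dH/dx = l(t - x) - l(t + x) < 0, hence H(theta(x2), x2) < H(theta(x2), x1);
   (C) H(theta(x), x) >= 0, since Lambda >= 0 on (0, 1.315] and Lambda <= 0 on
       [-1.315, 0).
   With x = pi/n these give n H_n < m H_m for 5 <= n < m. *)

From Stdlib Require Import Reals ClassicalEpsilon.
From Stdlib Require Import Lra Lia Machin.
Open Scope R_scope.

Lemma is_RInt_unique f a b v w : is_RInt f a b v -> is_RInt f a b w -> v = w.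
Proof. intros [p1 <-] [p2 <-]. apply RiemannInt_P5. Qed.

Lemma is_RInt_chasles f a b c v1 v2 :
  is_RInt f a b v1 -> is_RInt f b c v2 -> is_RInt f a c (v1 + v2).
Proof.
  intros [p1 <-] [p2 <-]. exists (RiemannInt_P24 p1 p2).
  symmetry; apply RiemannInt_P26.
Qed.

Lemma is_RInt_swap f a b v : is_RInt f a b v -> is_RInt f b a (- v).
Proof.
  intros [p <-]. exists (RiemannInt_P1 p).
  rewrite (RiemannInt_P8 p (RiemannInt_P1 p)). ring.
Qed.

Lemma is_RInt_le f g a b v w : a <= b -> is_RInt f a b v -> is_RInt g a b w ->
  (forall x, a < x < b -> f x <= g x) -> v <= w.
Proof. intros h [p1 <-] [p2 <-] H. apply RiemannInt_P19; auto. Qed.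

Lemma is_RInt_const c a b : is_RInt (fun _ => c) a b (c * (b - a)).
Proof. exists (RiemannInt_P14 a b c). apply RiemannInt_P15. Qed.

Lemma is_RInt_lin f g a b l v w : is_RInt f a b v -> is_RInt g a b w ->
  is_RInt (fun x => f x + l * g x) a b (v + l * w).
Proof. intros [p <-] [q <-]. exists (RiemannInt_P10 l p q). apply RiemannInt_P13. Qed.

Lemma is_RInt_ext f g a b v :
  (forall x, Rmin a b <= x <= Rmax a b -> f x = g x) ->
  is_RInt f a b v -> is_RInt g a b v.
Proof.
  intros H [p <-]. exists (Riemann_integrable_ext g H p).
  destruct (Rle_dec a b).
  - apply RiemannInt_P18; auto. intros x Hx; symmetry; apply H.
    rewrite Rmin_left, Rmax_right; lra.
  - rewrite (RiemannInt_P8 p (RiemannInt_P1 p)).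
    rewrite (RiemannInt_P8 (Riemann_integrable_ext g H p)
       (RiemannInt_P1 (Riemann_integrable_ext g H p))).
    f_equal. apply RiemannInt_P18; [lra|]. intros x Hx; symmetry; apply H.
    rewrite Rmin_right, Rmax_left; lra.
Qed.

Lemma vanishing_is_step (h : R -> R) a b :
  (forall x, Rmin a b < x < Rmax a b -> h x = 0) -> IsStepFun h a b.
Proof.
  intros H. exists (cons (Rmin a b) (cons (Rmax a b) nil)), (cons 0 nil).
  unfold adapted_couple; repeat split.
  - intros i Hi; simpl in Hi. destruct i; [|lia]. simpl.
    apply Rle_trans with a; [apply Rmin_l | apply Rmax_l].
  - intros i Hi; simpl in Hi. destruct i; [|lia].
    unfold constant_D_eq, open_interval; intros x Hx. simpl in Hx |- *. apply H; auto.
Qed.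

Lemma is_RInt_vanishing h a b :
  (forall x, Rmin a b < x < Rmax a b -> h x = 0) -> is_RInt h a b 0.
Proof.
  intros H.
  assert (pr : Riemann_integrable h a b).
  { intro eps. exists (mkStepFun (vanishing_is_step h a b H)).
    exists (mkStepFun (StepFun_P4 a b 0)). split.
    - intros t _. simpl. unfold fct_cte. rewrite Rminus_diag, Rabs_R0; lra.
    - rewrite StepFun_P18, Rmult_0_l, Rabs_R0. apply cond_pos. }
  exists pr. destruct (Rle_dec a b).
  - rewrite (RiemannInt_P18 pr (RiemannInt_P14 a b 0)); auto.
    + rewrite RiemannInt_P15; ring.
    + intros x Hx; unfold fct_cte; apply H. rewrite Rmin_left, Rmax_right; lra.
  - rewrite (RiemannInt_P8 _ (RiemannInt_P1 pr)).
    rewrite (RiemannInt_P18 (RiemannInt_P1 pr) (RiemannInt_P14 b a 0)); [|lra|].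
    + rewrite RiemannInt_P15; ring.
    + intros x Hx; unfold fct_cte; apply H. rewrite Rmin_right, Rmax_left; lra.
Qed.

Lemma is_RInt_ext_open f g a b v :
  (forall x, Rmin a b < x < Rmax a b -> f x = g x) ->
  is_RInt f a b v -> is_RInt g a b v.
Proof.
  intros H Hf.
  assert (Hd : is_RInt (fun x => g x - f x) a b 0).
  { apply is_RInt_vanishing. intros x Hx. rewrite (H x Hx). ring. }
  replace v with (v + 1 * 0) by ring.
  apply (is_RInt_ext (fun x => f x + 1 * (g x - f x))); [intros; ring|].
  now apply is_RInt_lin.
Qed.

Lemma is_RInt_FTC f F a b : a <= b ->
  (forall x, a <= x <= b -> continuity_pt f x) ->
  (forall x, a <= x <= b -> derivable_pt_lim F x (f x)) -> is_RInt f a b (F b - F a).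
Proof.
  intros hab C D.
  assert (A : antiderivative f F a b).
  { split; [|exact hab]. intros x Hx. exists (exist _ (f x) (D x Hx)). reflexivity. }
  destruct (antiderivative_Ucte f F _ a b A (RiemannInt_P29 hab C)) as [c Hc].
  exists (FTC_P1 hab C hab (Rle_refl b)).
  rewrite (RiemannInt_P20 hab (FTC_P1 hab C) (FTC_P1 hab C hab (Rle_refl b))).
  rewrite (Hc b), (Hc a); lra.
Qed.

Lemma is_RInt_reflect f a b v : a <= b -> (forall x, continuity_pt f x) ->
  is_RInt f a b v -> is_RInt (fun t => f (- t)) (- b) (- a) v.
Proof.
  intros hab C [pr <-].
  set (P := primitive hab (FTC_P1 hab (fun x _ => C x))).
  assert (HP : forall x, a <= x <= b -> derivable_pt_lim P x (f x))
    by (intros x hx; apply RiemannInt_P28; exact hx).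
  rewrite (RiemannInt_P20 hab (FTC_P1 hab (fun x _ => C x)) pr). fold P.
  replace (P b - P a) with ((- P (- - a)) - (- P (- - b))) by (rewrite !Ropp_involutive; ring).
  apply (is_RInt_FTC (fun t => f (- t)) (fun t => - P (- t))); [lra| |].
  - intros x _. apply (continuity_pt_comp Ropp f).
    + apply continuity_pt_opp, derivable_continuous_pt, derivable_pt_id.
    + apply C.
  - intros x hx.
    replace (f (- x)) with (- (f (- x) * -1)) by ring.
    apply (derivable_pt_lim_opp (fun t => P (- t))).
    apply (derivable_pt_lim_comp Ropp P).
    + apply (derivable_pt_lim_opp id), derivable_pt_lim_id.
    + apply HP; lra.
Qed.

Lemma ln_le x y : 0 < x -> x <= y -> ln x <= ln y.
Proof. intros hx [h|h]; [left; apply ln_increasing; auto | subst; lra]. Qed.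

(* Continuity of a pointwise maximum, via max(a, b) = (a + b + |a - b|)/2. *)
Lemma continuity_pt_Rmax f g x : continuity_pt f x -> continuity_pt g x ->
  continuity_pt (fun t => Rmax (f t) (g t)) x.
Proof.
  intros Hf Hg.
  apply continuity_pt_locally_ext with
    (f := fun t => / 2 * (f t + g t + Rabs (f t - g t))) (a := 1); [lra| |].
  - intros t _. unfold Rmax; destruct (Rle_dec (f t) (g t)).
    + rewrite Rabs_left1; lra.
    + rewrite Rabs_right; lra.
  - apply (continuity_pt_scal (fun t => f t + g t + Rabs (f t - g t))).
    apply (continuity_pt_plus (fun t => f t + g t) (fun t => Rabs (f t - g t))).
    + apply (continuity_pt_plus f g); auto.
    + apply (continuity_pt_comp (fun t => f t - g t) Rabs).
      * apply (continuity_pt_minus f g); auto.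
      * apply Rcontinuity_abs.
Qed.

Lemma continuity_pt_ln f x : continuity_pt f x -> 0 < f x ->
  continuity_pt (fun t => ln (f t)) x.
Proof.
  intros Hf Hp. apply (continuity_pt_comp f ln); auto.
  apply derivable_continuous_pt. exists (/ f x). apply derivable_pt_lim_ln; auto.
Qed.

Lemma continuity_pt_abs_2sin x : continuity_pt (fun t => Rabs (2 * sin t)) x.
Proof.
  apply (continuity_pt_comp (fun t => 2 * sin t) Rabs).
  - apply (continuity_pt_scal sin 2 x), continuity_sin.
  - apply Rcontinuity_abs.
Qed.

Lemma sin_neq_0 t : -PI < t < PI -> t <> 0 -> sin t <> 0.
Proof.
  intros [h1 h2] h0. destruct (Rlt_or_le 0 t) as [hpos|hle].
  - pose proof (sin_gt_0 t hpos h2); lra.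
  - pose proof (sin_lt_0_var t h1 ltac:(lra)); lra.
Qed.

(* Smooth truncation of the integrand, cutting |2 sin t| (rather than its
   logarithm) from below at e^{-M}: it is continuous everywhere and equals the
   truncation [lob_trunc M] wherever sin t <> 0. *)
Definition lob_smooth (M : nat) (t : R) : R :=
  ln (Rmax (Rabs (2 * sin t)) (exp (- INR M))).

Lemma lob_smooth_continuous M x : continuity_pt (lob_smooth M) x.
Proof.
  apply continuity_pt_ln.
  - apply (continuity_pt_Rmax (fun t => Rabs (2 * sin t)) (fun _ => exp (- INR M))).
    + apply continuity_pt_abs_2sin.
    + apply continuity_pt_const. intros a b; reflexivity.
  - apply Rlt_le_trans with (exp (- INR M)); [apply exp_pos | apply Rmax_r].
Qed.

Lemma lob_trunc_smooth M t : sin t <> 0 -> lob_trunc M t = lob_smooth M t.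
Proof.
  intros hs. unfold lob_trunc, lob_integrand, lob_smooth.
  assert (ha : 0 < Rabs (2 * sin t)) by (apply Rabs_pos_lt; lra).
  pose proof (exp_pos (- INR M)) as he.
  unfold Rmax at 2. destruct (Rle_dec (Rabs (2 * sin t)) (exp (- INR M))) as [h|h].
  - rewrite ln_exp. apply Rmax_right. rewrite <- (ln_exp (- INR M)). apply ln_le; auto.
  - apply Rmax_left. rewrite <- (ln_exp (- INR M)). apply ln_le; lra.
Qed.

Lemma lob_smooth_even M t : lob_smooth M (- t) = lob_smooth M t.
Proof. unfold lob_smooth. rewrite sin_neg, <- Rabs_Ropp. f_equal; f_equal; f_equal; ring. Qed.

Lemma lob_smooth_antitone M t : lob_smooth (S M) t <= lob_smooth M t.
Proof.
  unfold lob_smooth. apply ln_le.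
  - apply Rlt_le_trans with (exp (- INR (S M))); [apply exp_pos | apply Rmax_r].
  - apply Rle_max_compat_l. apply Rlt_le, exp_increasing. rewrite S_INR; lra.
Qed.

Definition lob_smooth_int (M : nat) (z : R) : R :=
  epsilon (inhabits 0) (fun v => is_RInt (lob_smooth M) 0 z v).

Lemma lob_smooth_int_spec M z : 0 <= z -> is_RInt (lob_smooth M) 0 z (lob_smooth_int M z).
Proof.
  intros hz. unfold lob_smooth_int. apply epsilon_spec.
  exists (RiemannInt (@continuity_implies_RiemannInt (lob_smooth M) 0 z hz
                        (fun x _ => lob_smooth_continuous M x))).
  eexists; reflexivity.
Qed.

Lemma Un_cv_eventually_ext (u v : nat -> R) l N :
  (forall n, (N <= n)%nat -> u n = v n) -> Un_cv u l -> Un_cv v l.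
Proof.
  intros E H eps he. destruct (H eps he) as [N1 HN1]. exists (max N N1).
  intros n hn. rewrite <- E by lia. apply HN1; lia.
Qed.

(* Over [0, z] with |z| < pi, [Lobachevsky z] is minus the limit of the
   integrals of the smooth truncations (they differ from [lob_trunc] at 0 only). *)
Lemma Lobachevsky_limit z u l : -PI < z < PI ->
  (forall M, is_RInt (lob_smooth M) 0 z (u M)) -> Un_cv u l -> Lobachevsky z = - l.
Proof.
  intros hz Hu Hl.
  assert (Ht : forall M, is_RInt (lob_trunc M) 0 z (u M)).
  { intros M. apply is_RInt_ext_open with (lob_smooth M); [|apply Hu].
    intros x hx. symmetry. apply lob_trunc_smooth, sin_neq_0;
      unfold Rmin, Rmax in hx; destruct (Rle_dec 0 z); lra. }
  unfold Lobachevsky. f_equal.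
  destruct (epsilon_spec (inhabits 0) (fun l => lob_integral_spec z l)
              (ex_intro _ l (ex_intro _ u (conj Ht Hl)))) as [v [Hv Hcv]].
  apply UL_sequence with v; auto.
  apply (Un_cv_eventually_ext u v l 0); auto.
  intros M _. apply (is_RInt_unique (lob_trunc M) 0 z); auto.
Qed.

Lemma PI_gt_3 : 3 < PI.
Proof. pose proof PI2_3_2; lra. Qed.

Lemma exp_neg_INR_small eps : 0 < eps ->
  exists N, forall M, (N <= M)%nat -> exp (- INR M) <= eps.
Proof.
  intros he. destruct (INR_unbounded (/ eps)) as [N HN]. exists N. intros M hM.
  pose proof (exp_ineq1_le (INR M)). apply le_INR in hM.
  rewrite exp_Ropp, <- (Rinv_inv eps). apply Rinv_le_contravar.
  - apply Rinv_0_lt_compat; auto.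
  - lra.
Qed.

Lemma is_RInt_ln_scal c a b : 0 < c -> 0 < a <= b ->
  is_RInt (fun t => ln (c * t)) a b ((b * ln (c * b) - b) - (a * ln (c * a) - a)).
Proof.
  intros hc hab.
  apply (is_RInt_FTC (fun t => ln (c * t)) (fun t => t * ln (c * t) - t)); [lra| |].
  - intros x hx. apply continuity_pt_ln; [|nra].
    apply (continuity_pt_scal id c x), derivable_continuous_pt, derivable_pt_id.
  - intros x hx. assert (hcx : 0 < c * x) by nra.
    replace (ln (c * x)) with (1 * ln (c * x) + x * (/ (c * x) * (c * 1)) - 1)
      by (field; lra).
    apply (derivable_pt_lim_minus (fun t => t * ln (c * t)) id);
      [|apply derivable_pt_lim_id].
    apply (derivable_pt_lim_mult id (fun t => ln (c * t))); [apply derivable_pt_lim_id|].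
    apply (derivable_pt_lim_comp (fun t => c * t) ln).
    + apply (derivable_pt_lim_scal id c x 1), derivable_pt_lim_id.
    + apply derivable_pt_lim_ln; auto.
Qed.

(* Comparison kernel ln max(c t, e^{-M}): on [0, 3/2] the smooth truncation
   lies between the kernels for c = 1 and c = 2, and the kernel integrals are
   explicit. *)
Definition lob_kernel (c : R) (M : nat) (t : R) : R := ln (Rmax (c * t) (exp (- INR M))).

Lemma lob_kernel_integral c M z : 0 < c -> exp (- INR M) / c <= z ->
  is_RInt (lob_kernel c M) 0 z (z * ln (c * z) - z + exp (- INR M) / c).
Proof.
  intros hc hr. set (e := exp (- INR M)) in *. set (r := e / c) in *.
  assert (he : 0 < e) by apply exp_pos.
  assert (hr0 : 0 < r) by (unfold r; apply Rdiv_lt_0_compat; auto).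
  assert (cr : c * r = e) by (unfold r; field; lra).
  assert (Hflat : is_RInt (lob_kernel c M) 0 r (- INR M * (r - 0))).
  { apply is_RInt_ext with (fun _ => - INR M); [|apply is_RInt_const].
    intros x hx. rewrite Rmin_left, Rmax_right in hx by lra.
    unfold lob_kernel. rewrite Rmax_right; fold e; [unfold e; rewrite ln_exp; auto|].
    rewrite <- cr. apply Rmult_le_compat_l; lra. }
  assert (Hlog : is_RInt (lob_kernel c M) r z ((z * ln (c * z) - z) - (r * ln (c * r) - r))).
  { apply is_RInt_ext with (fun t => ln (c * t)); [|apply is_RInt_ln_scal; lra].
    intros x hx. rewrite Rmin_left, Rmax_right in hx by lra.
    unfold lob_kernel. rewrite Rmax_left; fold e; auto.
    rewrite <- cr. apply Rmult_le_compat_l; lra. }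
  pose proof (is_RInt_chasles _ _ _ _ _ _ Hflat Hlog) as H.
  rewrite cr in H. unfold e in H. rewrite ln_exp in H.
  replace (z * ln (c * z) - z + r) with
    (- INR M * (r - 0) + (z * ln (c * z) - z - (r * - INR M - r))) by ring. auto.
Qed.

Lemma sin_bounds t : 0 <= t <= 3/2 -> t / 2 <= sin t <= t.
Proof.
  intros ht. pose proof PI_gt_3. split.
  - destruct (sin_bound t 0) as [Hs _]; try lra.
    unfold sin_approx, sin_term in Hs; simpl in Hs. nra.
  - destruct (Req_dec t 0) as [->|h]; [rewrite sin_0; lra|].
    left; apply sin_lt_x; lra.
Qed.

(* From t <= |2 sin t| <= 2t on [0, 3/2]. *)
Lemma lob_kernel_bounds M t : 0 <= t <= 3/2 ->
  lob_kernel 1 M t <= lob_smooth M t <= lob_kernel 2 M t.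
Proof.
  intros ht. pose proof (sin_bounds t ht). pose proof (exp_pos (- INR M)).
  unfold lob_kernel, lob_smooth. rewrite Rabs_right by lra.
  split; apply ln_le; try (apply Rlt_le_trans with (exp (- INR M)); [auto | apply Rmax_r]);
    apply Rle_max_compat_r; lra.
Qed.

Lemma lob_smooth_int_decreasing z : 0 <= z -> Un_decreasing (fun M => lob_smooth_int M z).
Proof.
  intros hz M. apply (is_RInt_le (lob_smooth (S M)) (lob_smooth M) 0 z);
    auto using lob_smooth_int_spec, lob_smooth_antitone.
Qed.

Lemma lob_smooth_int_lower M z : 0 < z <= 3/2 -> exp (- INR M) <= z ->
  z * ln z - z <= lob_smooth_int M z.
Proof.
  intros hz hM. pose proof (exp_pos (- INR M)).
  assert (HK := lob_kernel_integral 1 M z ltac:(lra) ltac:(rewrite Rdiv_1_r; auto)).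
  rewrite Rmult_1_l, Rdiv_1_r in HK.
  enough (z * ln z - z + exp (- INR M) <= lob_smooth_int M z) by lra.
  apply (is_RInt_le _ _ 0 z _ _ ltac:(lra) HK (lob_smooth_int_spec M z ltac:(lra))).
  intros x hx. apply lob_kernel_bounds; lra.
Qed.

Lemma lob_smooth_int_upper M z : 0 < z <= 3/2 -> exp (- INR M) / 2 <= z ->
  lob_smooth_int M z <= z * ln (2 * z) - z + exp (- INR M) / 2.
Proof.
  intros hz hM.
  apply (is_RInt_le (lob_smooth M) (lob_kernel 2 M) 0 z); try lra.
  - apply lob_smooth_int_spec; lra.
  - apply lob_kernel_integral; lra.
  - intros x hx. apply lob_kernel_bounds; lra.
Qed.

(* For 0 < z <= 3/2 the truncated integrals converge (they decrease and are
   bounded below), with limit at most z ln(2z) - z. *)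
Lemma lob_smooth_int_cv z : 0 < z <= 3/2 ->
  exists l, Un_cv (fun M => lob_smooth_int M z) l /\ l <= z * ln (2 * z) - z.
Proof.
  intros hz. pose proof (lob_smooth_int_decreasing z ltac:(lra)) as Hdec.
  assert (Hlb : has_lb (fun M => lob_smooth_int M z)).
  { exists (- (z * ln z - z)). intros x [i ->]. unfold opp_seq.
    destruct (exp_neg_INR_small z ltac:(lra)) as [N HN].
    pose proof (decreasing_prop _ i (max i N) Hdec ltac:(lia)).
    pose proof (lob_smooth_int_lower (max i N) z hz ltac:(apply HN; lia)). lra. }
  destruct (decreasing_cv _ Hdec Hlb) as [l Hl].
  exists l. split; auto.
  apply Rle_plus_epsilon. intros eps he.
  destruct (exp_neg_INR_small (Rmin z eps) ltac:(apply Rmin_pos; lra)) as [N HN].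
  specialize (HN N (le_n N)). pose proof (Rmin_l z eps). pose proof (Rmin_r z eps).
  pose proof (exp_pos (- INR N)).
  pose proof (decreasing_ineq _ l Hdec Hl N).
  pose proof (lob_smooth_int_upper N z hz ltac:(lra)). lra.
Qed.

(* Lambda is odd on [-3/2, 3/2]: reflect the truncated integrals. *)
Lemma Lobachevsky_odd z : 0 < z <= 3/2 -> Lobachevsky (- z) = - Lobachevsky z.
Proof.
  intros hz. pose proof PI_gt_3.
  destruct (lob_smooth_int_cv z hz) as [l [Hl _]].
  assert (Hrefl : forall M, is_RInt (lob_smooth M) 0 (- z) (opp_seq (fun M => lob_smooth_int M z) M)).
  { intros M. unfold opp_seq. apply is_RInt_swap.
    apply is_RInt_ext with (fun t => lob_smooth M (- t)); [intros; apply lob_smooth_even|].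
    assert (HR := is_RInt_reflect (lob_smooth M) 0 z _ ltac:(lra) (lob_smooth_continuous M)
                   (lob_smooth_int_spec M z ltac:(lra))).
    rewrite Ropp_0 in HR. exact HR. }
  rewrite (Lobachevsky_limit (- z) _ (- l) ltac:(lra) Hrefl (CV_opp _ _ Hl)).
  rewrite (Lobachevsky_limit z _ l ltac:(lra) (fun M => lob_smooth_int_spec M z ltac:(lra)) Hl).
  ring.
Qed.

(* e > 2.63, from e = (e^{1/16})^16 >= (17/16)^16. *)
Lemma exp_1_gt : 2.63 < exp 1.
Proof.
  assert (H : exp 1 = (exp (1/16)) ^ 16).
  { rewrite <- (Rpower_pow 16 (exp (1/16))) by apply exp_pos.
    unfold Rpower. rewrite ln_exp. f_equal. simpl. lra. }
  rewrite H. apply Rlt_le_trans with ((17/16) ^ 16); [simpl; lra|].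
  apply pow_incr. pose proof (exp_ineq1 (1/16)). lra.
Qed.

(* Lambda(z) >= z - z ln(2z) >= 0 as long as 2z <= e. *)
Lemma Lobachevsky_nonneg z : 0 < z <= 1.315 -> 0 <= Lobachevsky z.
Proof.
  intros hz. pose proof PI_gt_3.
  destruct (lob_smooth_int_cv z ltac:(lra)) as [l [Hl Hb]].
  rewrite (Lobachevsky_limit z _ l ltac:(lra) (fun M => lob_smooth_int_spec M z ltac:(lra)) Hl).
  assert (ln (2 * z) <= 1).
  { rewrite <- (ln_exp 1). apply ln_le; [lra|]. pose proof exp_1_gt; lra. }
  nra.
Qed.

Lemma Lobachevsky_nonpos z : -1.315 <= z < 0 -> Lobachevsky z <= 0.
Proof.
  intros hz. replace z with (- - z) by ring.
  rewrite Lobachevsky_odd by lra. pose proof (Lobachevsky_nonneg (- z)). lra.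
Qed.

(* Away from 0, the truncation is eventually inactive, so increments of
   Lambda are integrals of the integrand itself. *)
Lemma Lobachevsky_increment p y J : 0 < p <= y -> y <= 3/2 ->
  is_RInt lob_integrand p y J -> Lobachevsky y = Lobachevsky p - J.
Proof.
  intros hp hy HJ. pose proof PI_gt_3. pose proof PI2_3_2.
  destruct (lob_smooth_int_cv p ltac:(lra)) as [lp [Hp _]].
  assert (hsp : 0 < sin p) by (apply sin_gt_0; lra).
  destruct (exp_neg_INR_small (2 * sin p) ltac:(lra)) as [N HN].
  assert (E : forall M, (N <= M)%nat -> lob_smooth_int M p + J = lob_smooth_int M y).
  { intros M hM. apply (is_RInt_unique (lob_smooth M) 0 y); [|apply lob_smooth_int_spec; lra].
    apply is_RInt_chasles with p; [apply lob_smooth_int_spec; lra|].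
    revert HJ; apply is_RInt_ext. intros x hx.
    rewrite Rmin_left, Rmax_right in hx by lra.
    assert (sin p <= sin x).
    { destruct (Req_dec p x) as [->|hne]; [lra|]. left; apply sin_increasing_1; lra. }
    unfold lob_integrand, lob_smooth. rewrite Rmax_left; auto.
    apply Rle_trans with (2 * sin p); [apply HN; auto|].
    rewrite Rabs_right; lra. }
  assert (Hy : Un_cv (fun M => lob_smooth_int M y) (lp + J)).
  { apply Un_cv_eventually_ext with (fun M => lob_smooth_int M p + J) N; auto.
    intros eps he. destruct (Hp eps he) as [N1 HN1]. exists N1. intros n hn.
    unfold Rdist. replace (lob_smooth_int n p + J - (lp + J)) with (lob_smooth_int n p - lp)
      by ring. apply HN1; auto. }
  rewrite (Lobachevsky_limit y _ (lp + J) ltac:(lra) (fun M => lob_smooth_int_spec M y ltac:(lra)) Hy).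
  rewrite (Lobachevsky_limit p _ lp ltac:(lra) (fun M => lob_smooth_int_spec M p ltac:(lra)) Hp).
  ring.
Qed.

Lemma lob_integrand_even t : lob_integrand (- t) = lob_integrand t.
Proof. unfold lob_integrand. rewrite sin_neg, <- Rabs_Ropp. f_equal; f_equal; ring. Qed.

Lemma Lobachevsky_deriv_pos z : 0 < z < 3/2 ->
  derivable_pt_lim Lobachevsky z (- lob_integrand z).
Proof.
  intros hz. pose proof PI_gt_3. pose proof PI2_3_2.
  set (p := z / 2). set (q := (z + 3/2) / 2).
  assert (hpq : p <= q) by (unfold p, q; lra).
  assert (C : forall x, p <= x <= q -> continuity_pt lob_integrand x).
  { intros x hx. apply continuity_pt_ln; [apply continuity_pt_abs_2sin|].
    apply Rabs_pos_lt. pose proof (sin_gt_0 x ltac:(unfold p, q in *; lra) ltac:(unfold q in *; lra)).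
    lra. }
  set (P := primitive hpq (FTC_P1 hpq C)).
  apply derivable_pt_lim_locally_ext with (fun y => Lobachevsky p - P y) p q;
    [unfold p, q; lra| |].
  - intros y hy. symmetry. apply Lobachevsky_increment; try (unfold p, q in *; lra).
    unfold P, primitive. destruct (Rle_dec p y) as [r1|]; [|lra].
    destruct (Rle_dec y q) as [r2|]; [|lra].
    exists (FTC_P1 hpq C r1 r2). reflexivity.
  - replace (- lob_integrand z) with (0 - lob_integrand z) by ring.
    apply (derivable_pt_lim_minus (fct_cte (Lobachevsky p)) P).
    + apply derivable_pt_lim_const.
    + apply RiemannInt_P27. unfold p, q; lra.
Qed.

Lemma Lobachevsky_deriv z : z <> 0 -> -3/2 < z < 3/2 ->
  derivable_pt_lim Lobachevsky z (- lob_integrand z).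
Proof.
  intros h0 hz. destruct (Rlt_or_le 0 z) as [hpos|hle]; [apply Lobachevsky_deriv_pos; lra|].
  assert (hneg : z < 0) by (destruct hle; [auto | contradiction]).
  apply derivable_pt_lim_locally_ext with (fun y => - Lobachevsky (- y)) (-3/2) 0; [lra| |].
  - intros y hy. replace y with (- - y) at 2 by ring.
    rewrite (Lobachevsky_odd (- y)) by lra. ring.
  - rewrite <- lob_integrand_even.
    replace (- lob_integrand (- z)) with (- (- lob_integrand (- z) * -1)) by ring.
    apply (derivable_pt_lim_opp (fun y => Lobachevsky (- y))).
    apply (derivable_pt_lim_comp Ropp Lobachevsky).
    + apply (derivable_pt_lim_opp id), derivable_pt_lim_id.
    + apply Lobachevsky_deriv_pos; lra.
Qed.

Lemma lob_integrand_lt a b : 0 < a < b -> b <= 3/2 -> lob_integrand a < lob_integrand b.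
Proof.
  intros hab hb. pose proof PI2_3_2. pose proof PI_gt_3. unfold lob_integrand.
  pose proof (sin_gt_0 a ltac:(lra) ltac:(lra)).
  assert (sin a < sin b) by (apply sin_increasing_1; lra).
  rewrite !Rabs_right by lra. apply ln_increasing; lra.
Qed.

Lemma lob_integrand_le_pos a b : 0 < a <= b -> b <= 3/2 -> lob_integrand a <= lob_integrand b.
Proof.
  intros hab hb. destruct (Req_dec a b) as [->|hne]; [lra|].
  left; apply lob_integrand_lt; lra.
Qed.

Lemma lob_integrand_le_neg a b : -3/2 <= a <= b -> b < 0 -> lob_integrand b <= lob_integrand a.
Proof.
  intros hab hb. rewrite <- (lob_integrand_even a), <- (lob_integrand_even b).
  apply lob_integrand_le_pos; lra.
Qed.

Lemma Lobachevsky_comp_deriv g y dg : derivable_pt_lim g y dg ->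
  g y <> 0 -> -3/2 < g y < 3/2 ->
  derivable_pt_lim (fun s => Lobachevsky (g s)) y (- lob_integrand (g y) * dg).
Proof.
  intros Dg h0 hb. apply (derivable_pt_lim_comp g Lobachevsky); auto.
  apply Lobachevsky_deriv; auto.
Qed.

Lemma affine_deriv g a b y : (forall s, g s = a * s + b) -> derivable_pt_lim g y a.
Proof.
  intros E. apply derivable_pt_lim_ext with (fun s => a * s + b); [intros; auto|].
  assert (D := derivable_pt_lim_plus (mult_real_fct a id) (fct_cte b) y (a * 1) 0
                (derivable_pt_lim_scal id a y 1 (derivable_pt_lim_id y))
                (derivable_pt_lim_const b y)).
  rewrite Rmult_1_r, Rplus_0_r in D. exact D.
Qed.

Definition lobell_H (t x : R) : R :=
  2 * Lobachevsky t + Lobachevsky (t + x) + Lobachevsky (t - x)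
  - Lobachevsky (2 * t - PI / 2).

Lemma vol_Lobell_H n : vol_Lobell n = INR n / 2 * lobell_H (theta n) (PI / INR n).
Proof. reflexivity. Qed.

Definition lobell_H_dt (t x : R) : R :=
  - 2 * lob_integrand t - lob_integrand (t + x) - lob_integrand (t - x)
  + 2 * lob_integrand (2 * t - PI / 2).

Definition lobell_H_dx (t x : R) : R := lob_integrand (t - x) - lob_integrand (t + x).

(* Admissible region: all arguments of Lambda in H are nonzero and in (-3/2, 3/2). *)
Definition admissible (t x : R) : Prop :=
  0 < x /\ 0 < t - x /\ t + x < 3/2 /\ -3/2 < 2 * t - PI / 2 < 0.

Lemma lobell_H_deriv_t t x : admissible t x ->
  derivable_pt_lim (fun s => lobell_H s x) t (lobell_H_dt t x).
Proof.
  intros (h1 & h2 & h3 & h4 & h5). pose proof PI_gt_3.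
  replace (lobell_H_dt t x) with
    (2 * (- lob_integrand t) + - lob_integrand (t + x) * 1 + - lob_integrand (t - x) * 1
     - - lob_integrand (2 * t - PI / 2) * 2) by (unfold lobell_H_dt; ring).
  apply (derivable_pt_lim_minus
    (fun s => 2 * Lobachevsky s + Lobachevsky (s + x) + Lobachevsky (s - x))
    (fun s => Lobachevsky (2 * s - PI / 2))).
  - apply (derivable_pt_lim_plus
      (fun s => 2 * Lobachevsky s + Lobachevsky (s + x)) (fun s => Lobachevsky (s - x))).
    + apply (derivable_pt_lim_plus (fun s => 2 * Lobachevsky s) (fun s => Lobachevsky (s + x))).
      * apply (derivable_pt_lim_scal Lobachevsky 2), Lobachevsky_deriv; lra.
      * apply (Lobachevsky_comp_deriv (fun s => s + x)); [apply (affine_deriv _ 1 x); intros; ring | lra | lra].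
    + apply (Lobachevsky_comp_deriv (fun s => s - x)); [apply (affine_deriv _ 1 (- x)); intros; ring | lra | lra].
  - apply (Lobachevsky_comp_deriv (fun s => 2 * s - PI / 2)); [apply (affine_deriv _ 2 (- (PI / 2))); intros; ring | lra | lra].
Qed.

Lemma lobell_H_deriv_x t x : admissible t x ->
  derivable_pt_lim (fun y => lobell_H t y) x (lobell_H_dx t x).
Proof.
  intros (h1 & h2 & h3 & h4 & h5).
  replace (lobell_H_dx t x) with
    (0 + - lob_integrand (t + x) * 1 + - lob_integrand (t - x) * -1 - 0)
    by (unfold lobell_H_dx; ring).
  apply (derivable_pt_lim_minus
    (fun y => 2 * Lobachevsky t + Lobachevsky (t + y) + Lobachevsky (t - y))
    (fct_cte (Lobachevsky (2 * t - PI / 2)))); [|apply derivable_pt_lim_const].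
  apply (derivable_pt_lim_plus
    (fun y => 2 * Lobachevsky t + Lobachevsky (t + y)) (fun y => Lobachevsky (t - y))).
  - apply (derivable_pt_lim_plus (fct_cte (2 * Lobachevsky t)) (fun y => Lobachevsky (t + y))).
    + apply derivable_pt_lim_const.
    + apply (Lobachevsky_comp_deriv (fun y => t + y)); [apply (affine_deriv _ 1 t); intros; ring | lra | lra].
  - apply (Lobachevsky_comp_deriv (fun y => t - y)); [apply (affine_deriv _ (-1) t); intros; ring | lra | lra].
Qed.

(* Trigonometric identity behind the critical point: if 2 sin t cos x = 1 then
   (2 sin t)^2 (2 sin (t+x)) (2 sin (t-x)) = (2 cos 2t)^2. *)
Lemma critical_identity t x : 2 * sin t * cos x = 1 ->
  (2 * sin t) * (2 * sin t) * (2 * sin (t + x)) * (2 * sin (t - x))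
  = (2 * cos (2 * t)) * (2 * cos (2 * t)).
Proof.
  intros hSC. rewrite cos_2a_sin, sin_plus, sin_minus.
  pose proof (sin2_cos2 t) as et. pose proof (sin2_cos2 x) as ex. unfold Rsqr in *.
  replace (2 * (1 - 2 * sin t * sin t) * (2 * (1 - 2 * sin t * sin t))) with
    (16 * sin t * sin t * (sin t * sin t * cos x * cos x - (1 - sin t * sin t) * (1 - cos x * cos x))
     + 4 * (1 - (2 * sin t * cos x) * (2 * sin t * cos x))) by ring.
  rewrite hSC.
  replace (1 - sin t * sin t) with (cos t * cos t) by lra.
  replace (1 - cos x * cos x) with (sin x * sin x) by lra.
  ring.
Qed.

Lemma lobell_H_dt_critical t x : admissible t x -> 2 * sin t * cos x = 1 ->
  lobell_H_dt t x = 0.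
Proof.
  intros (h1 & h2 & h3 & h4 & h5) hc. pose proof PI_gt_3.
  assert (Epos : forall u, 0 < sin u -> lob_integrand u = ln (2 * sin u))
    by (intros u hu; unfold lob_integrand; rewrite Rabs_right; lra).
  assert (p1 : 0 < sin t) by (apply sin_gt_0; lra).
  assert (p2 : 0 < sin (t + x)) by (apply sin_gt_0; lra).
  assert (p3 : 0 < sin (t - x)) by (apply sin_gt_0; lra).
  assert (p4 : 0 < cos (2 * t)) by (apply cos_gt_0; lra).
  assert (Eneg : lob_integrand (2 * t - PI / 2) = ln (2 * cos (2 * t))).
  { unfold lob_integrand. rewrite sin_minus, sin_PI2, cos_PI2, Rabs_left by lra.
    f_equal; ring. }
  unfold lobell_H_dt. rewrite (Epos t), (Epos (t + x)), (Epos (t - x)), Eneg by auto.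
  assert (L := f_equal ln (critical_identity t x hc)).
  set (a := 2 * sin t) in *. set (b := 2 * sin (t + x)) in *.
  set (c := 2 * sin (t - x)) in *. set (d := 2 * cos (2 * t)) in *.
  assert (0 < a /\ 0 < b /\ 0 < c /\ 0 < d) as (pa & pb & pc & pd)
    by (unfold a, b, c, d; lra).
  rewrite !ln_mult in L by (repeat apply Rmult_lt_0_compat; lra). lra.
Qed.

Lemma lobell_H_dt_antitone t c x : admissible t x -> admissible c x -> t <= c ->
  lobell_H_dt c x <= lobell_H_dt t x.
Proof.
  intros (h1 & h2 & h3 & h4 & h5) (k1 & k2 & k3 & k4 & k5) htc. unfold lobell_H_dt.
  pose proof (lob_integrand_le_pos t c ltac:(lra) ltac:(lra)).
  pose proof (lob_integrand_le_pos (t + x) (c + x) ltac:(lra) ltac:(lra)).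
  pose proof (lob_integrand_le_pos (t - x) (c - x) ltac:(lra) ltac:(lra)).
  pose proof (lob_integrand_le_neg (2 * t - PI / 2) (2 * c - PI / 2) ltac:(lra) ltac:(lra)).
  lra.
Qed.

Lemma lobell_H_step_t t1 t2 x : admissible t1 x -> admissible t2 x -> t1 < t2 ->
  lobell_H_dt t1 x = 0 -> lobell_H t2 x <= lobell_H t1 x.
Proof.
  intros A1 A2 ht Hc.
  assert (Abetween : forall c, t1 <= c <= t2 -> admissible c x)
    by (intros c hc; unfold admissible in *; lra).
  destruct (MVT_cor2 (fun s => lobell_H s x) (fun s => lobell_H_dt s x) t1 t2 ht)
    as [c [Ec hc]].
  { intros c hc. apply lobell_H_deriv_t, Abetween, hc. }
  pose proof (lobell_H_dt_antitone t1 c x A1 (Abetween c ltac:(lra)) ltac:(lra)).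
  nra.
Qed.

Lemma lobell_H_step_x t x1 x2 : 0 < x1 < x2 -> admissible t x2 ->
  lobell_H t x2 < lobell_H t x1.
Proof.
  intros hx A2.
  assert (Abetween : forall c, x1 <= c <= x2 -> admissible t c)
    by (intros c hc; unfold admissible in *; lra).
  destruct (MVT_cor2 (fun y => lobell_H t y) (fun y => lobell_H_dx t y) x1 x2 ltac:(lra))
    as [c [Ec hc]].
  { intros c hc. apply lobell_H_deriv_x, Abetween, hc. }
  destruct (Abetween c ltac:(lra)) as (k1 & k2 & k3 & _).
  pose proof (lob_integrand_lt (t - c) (t + c) ltac:(lra) ltac:(lra)).
  unfold lobell_H_dx in Ec. nra.
Qed.

Lemma lobell_H_nonneg t x : 0 < x < t -> t + x <= 1.315 ->
  -1.315 <= 2 * t - PI / 2 < 0 -> 0 <= lobell_H t x.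
Proof.
  intros hx ht h2t. unfold lobell_H.
  pose proof (Lobachevsky_nonneg t ltac:(lra)).
  pose proof (Lobachevsky_nonneg (t + x) ltac:(lra)).
  pose proof (Lobachevsky_nonneg (t - x) ltac:(lra)).
  pose proof (Lobachevsky_nonpos (2 * t - PI / 2) h2t).
  lra.
Qed.

(* pi <= 3.1416, from the alternating series for pi/4 (Machin). *)
Lemma PI_le : PI <= 3.1416.
Proof.
  destruct (PI_2_3_7_ineq 2) as [_ H].
  unfold tg_alt, PI_2_3_7_tg, Ratan_seq in H. simpl in H. lra.
Qed.

Lemma sin_lt_inv a b : -(PI/2) <= a <= PI/2 -> -(PI/2) <= b <= PI/2 -> sin a < sin b -> a < b.
Proof.
  intros ha hb hs. destruct (Rlt_or_le a b) as [h|h]; auto.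
  destruct (Req_dec a b) as [->|hne]; [lra|].
  assert (sin b < sin a) by (apply sin_increasing_1; lra). lra.
Qed.

(* The angle theta of the Lobell polyhedra as a function of x = pi/n: it is
   arcsin(1/(2 cos x)), the critical point of t |-> H(t, x). *)
Definition crit_angle (x : R) : R := PI / 2 - acos (1 / (2 * cos x)).

Lemma crit_angle_spec x : 0 < x <= PI / 5 ->
  2 * sin (crit_angle x) * cos x = 1 /\ PI / 6 < crit_angle x < 0.68 /\ x < crit_angle x.
Proof.
  intros hx. pose proof PI_le. pose proof PI_gt_3. unfold crit_angle.
  assert (hc0 : 0 < cos x) by (apply cos_gt_0; lra).
  assert (hcb : 1 - x * x / 2 <= cos x).
  { destruct (cos_bound x 0) as [Hc _]; try lra.
    unfold cos_approx, cos_term in Hc; simpl in Hc. lra. }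
  set (s := 1 / (2 * cos x)).
  assert (hsc : s * (2 * cos x) = 1) by (unfold s; field; lra).
  assert (hc1 : cos x < 1) by (rewrite <- cos_0; apply cos_decreasing_1; lra).
  assert (hs1 : 1/2 < s) by nra.
  assert (hs2 : s <= 0.623) by (assert (x <= 0.62832) by lra; nra).
  rewrite <- asin_acos by lra.
  pose proof (sin_asin s ltac:(lra)) as Hss. pose proof (asin_bound s).
  repeat split.
  - rewrite Hss. lra.
  - apply sin_lt_inv; try lra. rewrite sin_PI6. lra.
  - apply sin_lt_inv; try lra.
    destruct (sin_bound 0.68 0) as [Hc _]; try lra.
    unfold sin_approx, sin_term in Hc; simpl in Hc. lra.
  - apply sin_lt_inv; try lra. rewrite Hss.
    assert (h2 : sin (2 * x) < 1) by (rewrite <- sin_PI2; apply sin_increasing_1; lra).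
    rewrite sin_2a in h2. nra.
Qed.

(* theta increases with x, since cos x decreases. *)
Lemma crit_angle_increasing x1 x2 : 0 < x1 < x2 -> x2 <= PI / 5 ->
  crit_angle x1 < crit_angle x2.
Proof.
  intros hx hx2. pose proof PI_gt_3.
  destruct (crit_angle_spec x1 ltac:(lra)) as [s1 [b1 _]].
  destruct (crit_angle_spec x2 ltac:(lra)) as [s2 [b2 _]].
  assert (cos x2 < cos x1) by (apply cos_decreasing_1; lra).
  assert (0 < cos x2) by (apply cos_gt_0; lra).
  set (c1 := crit_angle x1) in *. set (c2 := crit_angle x2) in *.
  assert (0 < sin c1) by nra.
  apply sin_lt_inv; try lra.
  apply Rmult_lt_reg_r with (cos x2); [lra|]. nra.
Qed.

Lemma crit_angle_admissible x1 x2 : 0 < x1 <= x2 -> x2 <= PI / 5 ->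
  admissible (crit_angle x2) x1.
Proof.
  intros hx hx2. pose proof PI_le. pose proof PI_gt_3.
  destruct (crit_angle_spec x2 ltac:(lra)) as [_ [b2 c2]].
  unfold admissible. lra.
Qed.

Lemma lobell_H_crit_decreasing x1 x2 : 0 < x1 < x2 -> x2 <= PI / 5 ->
  lobell_H (crit_angle x2) x2 < lobell_H (crit_angle x1) x1.
Proof.
  intros hx hx2.
  assert (Hstep_t : lobell_H (crit_angle x2) x1 <= lobell_H (crit_angle x1) x1).
  { apply lobell_H_step_t.
    - apply crit_angle_admissible; lra.
    - apply crit_angle_admissible; lra.
    - apply crit_angle_increasing; lra.
    - apply lobell_H_dt_critical; [apply crit_angle_admissible; lra|].
      apply crit_angle_spec; lra. }
  assert (Hstep_x : lobell_H (crit_angle x2) x2 < lobell_H (crit_angle x2) x1).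
  { apply lobell_H_step_x; [lra | apply crit_angle_admissible; lra]. }
  lra.
Qed.

Lemma lobell_H_crit_nonneg x : 0 < x <= PI / 5 -> 0 <= lobell_H (crit_angle x) x.
Proof.
  intros hx. pose proof PI_le. pose proof PI_gt_3.
  destruct (crit_angle_spec x hx) as [_ [b c]].
  apply lobell_H_nonneg; lra.
Qed.

Lemma PI_div_INR_bounds n m : (5 <= n)%nat -> (n < m)%nat ->
  0 < PI / INR m < PI / INR n /\ PI / INR n <= PI / 5.
Proof.
  intros hn hm. pose proof PI_gt_3.
  assert (Hn : 5 <= INR n) by (replace 5 with (INR 5) by (simpl; lra); apply le_INR; lia).
  assert (Hm : INR n < INR m) by (apply lt_INR; lia).
  repeat split.
  - apply Rdiv_lt_0_compat; lra.
  - unfold Rdiv. apply Rmult_lt_compat_l; [lra|]. apply Rinv_lt_contravar; nra.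
  - unfold Rdiv. apply Rmult_le_compat_l; [lra|]. apply Rinv_le_contravar; lra.
Qed.

Theorem mainTheorem3 :
  forall n m : nat, (5 <= n)%nat -> (n < m)%nat -> vol_Lobell n < vol_Lobell m.
Proof.
  intros n m hn hm.
  rewrite !vol_Lobell_H. change (theta n) with (crit_angle (PI / INR n)).
  change (theta m) with (crit_angle (PI / INR m)).
  destruct (PI_div_INR_bounds n m hn hm) as [[hxm hmn] hxn].
  pose proof (lobell_H_crit_decreasing (PI / INR m) (PI / INR n) ltac:(lra) hxn).
  pose proof (lobell_H_crit_nonneg (PI / INR n) ltac:(lra)).
  assert (0 < INR n < INR m) by (split; [apply lt_0_INR | apply lt_INR]; lia).
  nra.
Qed.
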